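(* Let $P,Q\in\Gamma_n$ with $P\ne Q$, and $0<r\le R$ with $r\le p_i/q_i\le R$ for all $i$. Then $$r\le\frac{F(Q\|P)}{F(P\|Q)}\le R\qquad\text{and}\qquad r\le\sqrt{\frac{G(Q\|P)}{G(P\|Q)}}\le R.$$
   Context: $\Gamma_n=\{P=(p_1,\dots,p_n): p_i>0,\ \sum_i p_i=1\}$, $n\ge2$. Relative Jensen–Shannon divergence $F(P\|Q)=\sum_i p_i\ln\frac{2p_i}{p_i+q_i}$, $F(Q\|P)=\sum_i q_i\ln\frac{2q_i}{p_i+q_i}$; relative arithmetic–geometric divergence $G(P\|Q)=\sum_i\frac{p_i+q_i}{2}\ln\frac{p_i+q_i}{2p_i}$, $G(Q\|P)=\sum_i\frac{p_i+q_i}{2}\ln\frac{p_i+q_i}{2q_i}$. *)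

(* probability vectors are functions nat -> R, indices 0..n-1. *)
From Stdlib Require Import Reals Lra List.
Open Scope R_scope.

Fixpoint sumn (n : nat) (f : nat -> R) : R :=
  match n with
  | O => 0
  | S m => sumn m f + f m
  end.

Definition Gamma (n : nat) (p : nat -> R) : Prop :=
  (forall i, (i < n)%nat -> 0 < p i) /\ sumn n p = 1.

Definition F (n : nat) (p q : nat -> R) : R :=
  sumn n (fun i => p i * ln (2 * p i / (p i + q i))).

Definition G (n : nat) (p q : nat -> R) : R :=
  sumn n (fun i => (p i + q i) / 2 * ln ((p i + q i) / (2 * p i))).

From Stdlib Require Import Reals Lra Lia.
From Coquelicot Require Import Coquelicot.
Open Scope R_scope.

(* With t = p_i / q_i, each of the four divergences is an f-divergence
   sum_i q_i phi (t_i), and adding to phi an affine term (which sums to zero,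
   as P and Q are probability vectors) gives phi(1) = phi'(1) = 0.  The
   generators of F(Q||P) and F(P||Q) have second derivatives related by
   phi_rev'' = u phi'', those of G(Q||P) and G(P||Q) by phi_rev'' = u^2 phi''.
   Since every u between t_i and 1 lies in [r, R], two applications of the
   mean value theorem starting from u = 1 give
   r phi(t_i) <= phi_rev(t_i) <= R phi(t_i) (resp. with r^2, R^2)
   termwise; summing with the weights q_i yields the bounds, and P <> Q makes
   the denominators positive. *)

Definition deriv_on_pos (f f' : R -> R) : Prop :=
  forall u, 0 < u -> derivable_pt_lim f u (f' u).

Lemma deriv_on_pos_lincomb (f f' g g' : R -> R) (c d : R) :
  deriv_on_pos f f' -> deriv_on_pos g g' ->
  deriv_on_pos (fun u => c * f u + d * g u) (fun u => c * f' u + d * g' u).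
Proof.
  intros Hf Hg u Hu.
  apply derivable_pt_lim_plus; apply derivable_pt_lim_scal; auto.
Qed.

Lemma deriv_on_pos_opp (f f' : R -> R) :
  deriv_on_pos f f' -> deriv_on_pos (fun u => - f u) (fun u => - f' u).
Proof. intros Hf u Hu. exact (derivable_pt_lim_opp f u (f' u) (Hf u Hu)). Qed.

Lemma deriv_on_pos_nonneg_le (f f' : R -> R) (x y : R) :
  deriv_on_pos f f' -> 0 < x -> x <= y ->
  (forall u, x < u < y -> 0 <= f' u) -> f x <= f y.
Proof.
  intros Hf Hx Hxy Hf'.
  destruct (Req_dec x y) as [<- | Hne]; [lra |].
  destruct (MVT_cor2 f f' x y) as [c [Hc Hcxy]]; [lra | intros c Hc; apply Hf; lra |].
  assert (0 <= f' c * (y - x)) by (apply Rmult_le_pos; [apply Hf'|]; lra).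
  lra.
Qed.

Lemma deriv_on_pos_pos_lt (f f' : R -> R) (x y : R) :
  deriv_on_pos f f' -> 0 < x -> x < y ->
  (forall u, x < u < y -> 0 < f' u) -> f x < f y.
Proof.
  intros Hf Hx Hxy Hf'.
  destruct (MVT_cor2 f f' x y) as [c [Hc Hcxy]]; [lra | intros c Hc; apply Hf; lra |].
  assert (0 < f' c * (y - x)) by (apply Rmult_lt_0_compat; [apply Hf'|]; lra).
  lra.
Qed.

Section FlatAtOne.

Variables h h' h'' : R -> R.
Hypothesis Dh : deriv_on_pos h h'.
Hypothesis Dh' : deriv_on_pos h' h''.
Hypothesis h_1 : h 1 = 0.
Hypothesis h'_1 : h' 1 = 0.

Lemma flat_at_one_nonneg (t : R) :
  0 < t -> (forall u, Rmin t 1 <= u <= Rmax t 1 -> 0 <= h'' u) -> 0 <= h t.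
Proof.
  intros Ht Hh''.
  destruct (Rle_dec 1 t) as [H1t | Ht1].
  - rewrite Rmin_right, Rmax_left in Hh'' by lra.
    assert (Hh' : forall u, 1 < u < t -> 0 <= h' u).
    { intros u Hu. rewrite <- h'_1.
      apply (deriv_on_pos_nonneg_le h' h''); try lra; auto.
      intros v Hv; apply Hh''; lra. }
    rewrite <- h_1. apply (deriv_on_pos_nonneg_le h h'); auto; lra.
  - rewrite Rmin_left, Rmax_right in Hh'' by lra.
    assert (Hh' : forall u, t < u < 1 -> h' u <= 0).
    { intros u Hu. rewrite <- h'_1.
      apply (deriv_on_pos_nonneg_le h' h''); try lra; auto.
      intros v Hv; apply Hh''; lra. }
    assert (- h t <= - h 1); [| lra].
    apply (deriv_on_pos_nonneg_le _ _ t 1 (deriv_on_pos_opp h h' Dh)); try lra.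
    intros u Hu. specialize (Hh' u Hu). lra.
Qed.

Lemma flat_at_one_pos (t : R) :
  0 < t -> t <> 1 -> (forall u, 0 < u -> 0 < h'' u) -> 0 < h t.
Proof.
  intros Ht Ht1 Hh''.
  destruct (Rlt_dec 1 t) as [H1t | Ht1'].
  - assert (Hh' : forall u, 1 < u < t -> 0 < h' u).
    { intros u Hu. rewrite <- h'_1.
      apply (deriv_on_pos_pos_lt h' h''); try lra; auto.
      intros v Hv; apply Hh''; lra. }
    rewrite <- h_1. apply (deriv_on_pos_pos_lt h h'); auto; lra.
  - assert (Hh' : forall u, t < u < 1 -> h' u < 0).
    { intros u Hu. rewrite <- h'_1.
      apply (deriv_on_pos_pos_lt h' h''); try lra; auto.
      intros v Hv; apply Hh''; lra. }
    assert (- h t < - h 1); [| lra].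
    apply (deriv_on_pos_pos_lt _ _ t 1 (deriv_on_pos_opp h h' Dh)); try lra.
    intros u Hu. specialize (Hh' u Hu). lra.
Qed.

End FlatAtOne.

Lemma flat_at_one_compare (f f' f'' g g' g'' : R -> R) (a b t : R) :
  deriv_on_pos f f' -> deriv_on_pos f' f'' ->
  deriv_on_pos g g' -> deriv_on_pos g' g'' ->
  f 1 = 0 -> f' 1 = 0 -> g 1 = 0 -> g' 1 = 0 -> 0 < t ->
  (forall u, Rmin t 1 <= u <= Rmax t 1 -> a * g'' u <= f'' u <= b * g'' u) ->
  a * g t <= f t <= b * g t.
Proof.
  intros Df Df' Dg Dg' f1 f'1 g1 g'1 Ht Hbd.
  split.
  - assert (0 <= 1 * f t + (- a) * g t); [| lra].
    apply (flat_at_one_nonneg (fun u => 1 * f u + (- a) * g u) (fun u => 1 * f' u + (- a) * g' u)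
             (fun u => 1 * f'' u + (- a) * g'' u));
      try apply deriv_on_pos_lincomb; auto.
    + cbv beta; rewrite f1, g1; ring.
    + cbv beta; rewrite f'1, g'1; ring.
    + intros u Hu. specialize (Hbd u Hu). lra.
  - assert (0 <= (-1) * f t + b * g t); [| lra].
    apply (flat_at_one_nonneg (fun u => (-1) * f u + b * g u) (fun u => (-1) * f' u + b * g' u)
             (fun u => (-1) * f'' u + b * g'' u));
      try apply deriv_on_pos_lincomb; auto.
    + cbv beta; rewrite f1, g1; ring.
    + cbv beta; rewrite f'1, g'1; ring.
    + intros u Hu. specialize (Hbd u Hu). lra.
Qed.

Definition phiF (u : R) : R := u * ln (2 * u / (1 + u)) - (u - 1) / 2.
Definition phiF' (u : R) : R := ln (2 * u / (1 + u)) + / (1 + u) - / 2.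
Definition phiF'' (u : R) : R := / (u * ((1 + u) * (1 + u))).

Definition phiF_rev (u : R) : R := ln (2 / (1 + u)) + (u - 1) / 2.
Definition phiF_rev' (u : R) : R := - / (1 + u) + / 2.
Definition phiF_rev'' (u : R) : R := / ((1 + u) * (1 + u)).

Definition phiG (u : R) : R := (u + 1) / 2 * ln ((u + 1) / (2 * u)) + (u - 1) / 2.
Definition phiG' (u : R) : R := ln ((u + 1) / (2 * u)) / 2 - / (2 * u) + / 2.
Definition phiG'' (u : R) : R := / (2 * (u * u) * (u + 1)).

Definition phiG_rev (u : R) : R := (u + 1) / 2 * ln ((u + 1) / 2) - (u - 1) / 2.
Definition phiG_rev' (u : R) : R := ln ((u + 1) / 2) / 2.
Definition phiG_rev'' (u : R) : R := / (2 * (u + 1)).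

Ltac pos_expr :=
  repeat (first [apply Rmult_lt_0_compat | apply Rinv_0_lt_compat
                | apply Rdiv_lt_0_compat]); lra.

Ltac deriv_side :=
  repeat match goal with
  | |- _ /\ _ => split
  | |- True => exact I
  | |- _ <> 0 => apply Rgt_not_eq; unfold Rgt; pos_expr
  | |- 0 < _ => pos_expr
  end.

Ltac solve_deriv_on_pos :=
  intros u Hu; apply is_derive_Reals; auto_derive;
  [deriv_side | unfold Rdiv; field; deriv_side].

Lemma phiF_deriv : deriv_on_pos phiF phiF'.
Proof. unfold phiF, phiF'. solve_deriv_on_pos. Qed.
Lemma phiF'_deriv : deriv_on_pos phiF' phiF''.
Proof. unfold phiF', phiF''. solve_deriv_on_pos. Qed.
Lemma phiF_rev_deriv : deriv_on_pos phiF_rev phiF_rev'.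
Proof. unfold phiF_rev, phiF_rev'. solve_deriv_on_pos. Qed.
Lemma phiF_rev'_deriv : deriv_on_pos phiF_rev' phiF_rev''.
Proof. unfold phiF_rev', phiF_rev''. solve_deriv_on_pos. Qed.
Lemma phiG_deriv : deriv_on_pos phiG phiG'.
Proof. unfold phiG, phiG'. solve_deriv_on_pos. Qed.
Lemma phiG'_deriv : deriv_on_pos phiG' phiG''.
Proof. unfold phiG', phiG''. solve_deriv_on_pos. Qed.
Lemma phiG_rev_deriv : deriv_on_pos phiG_rev phiG_rev'.
Proof. unfold phiG_rev, phiG_rev'. solve_deriv_on_pos. Qed.
Lemma phiG_rev'_deriv : deriv_on_pos phiG_rev' phiG_rev''.
Proof. unfold phiG_rev', phiG_rev''. solve_deriv_on_pos. Qed.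

Lemma ln_eq_0 (x : R) : x = 1 -> ln x = 0.
Proof. intros ->; exact ln_1. Qed.

Lemma phiF_flat : phiF 1 = 0 /\ phiF' 1 = 0.
Proof. unfold phiF, phiF'; rewrite (ln_eq_0 (2 * 1 / (1 + 1))) by field; split; field. Qed.
Lemma phiF_rev_flat : phiF_rev 1 = 0 /\ phiF_rev' 1 = 0.
Proof. unfold phiF_rev, phiF_rev'; rewrite (ln_eq_0 (2 / (1 + 1))) by field; split; field. Qed.
Lemma phiG_flat : phiG 1 = 0 /\ phiG' 1 = 0.
Proof. unfold phiG, phiG'; rewrite (ln_eq_0 ((1 + 1) / (2 * 1))) by field; split; field. Qed.
Lemma phiG_rev_flat : phiG_rev 1 = 0 /\ phiG_rev' 1 = 0.
Proof. unfold phiG_rev, phiG_rev'; rewrite (ln_eq_0 ((1 + 1) / 2)) by field; split; field. Qed.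

Lemma phiF_pos (t : R) : 0 < t -> t <> 1 -> 0 < phiF t.
Proof.
  intros Ht Ht1. destruct phiF_flat as [H1 H1'].
  apply (flat_at_one_pos phiF phiF' phiF'' phiF_deriv phiF'_deriv); auto.
  intros u Hu; unfold phiF''; pos_expr.
Qed.

Lemma phiG_pos (t : R) : 0 < t -> t <> 1 -> 0 < phiG t.
Proof.
  intros Ht Ht1. destruct phiG_flat as [H1 H1'].
  apply (flat_at_one_pos phiG phiG' phiG'' phiG_deriv phiG'_deriv); auto.
  intros u Hu; unfold phiG''; pos_expr.
Qed.

Section Between.

Variables r R0 t : R.
Hypothesis Hr : 0 < r.
Hypothesis Hr1 : r <= 1.
Hypothesis H1R : 1 <= R0.
Hypothesis Ht : r <= t <= R0.

Let between_in_range (u : R) : Rmin t 1 <= u <= Rmax t 1 -> r <= u <= R0.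
Proof.
  intros Hu. assert (r <= Rmin t 1) by (apply Rmin_glb; lra).
  assert (Rmax t 1 <= R0) by (apply Rmax_lub; lra). lra.
Qed.

Lemma phiF_rev_between : 0 <= phiF t /\ r * phiF t <= phiF_rev t <= R0 * phiF t.
Proof.
  destruct phiF_flat as [H1 H1'], phiF_rev_flat as [H2 H2'].
  split.
  - apply (flat_at_one_nonneg phiF phiF' phiF'' phiF_deriv phiF'_deriv); auto; [lra |].
    intros u Hu. apply between_in_range in Hu. left; unfold phiF''; pos_expr.
  - apply (flat_at_one_compare phiF_rev phiF_rev' phiF_rev'' phiF phiF' phiF''
             r R0 t phiF_rev_deriv phiF_rev'_deriv phiF_deriv phiF'_deriv); auto; [lra |].
    intros u Hu. apply between_in_range in Hu.
    assert (0 < phiF'' u) by (unfold phiF''; pos_expr).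
    replace (phiF_rev'' u) with (u * phiF'' u) by (unfold phiF_rev'', phiF''; field; lra).
    nra.
Qed.

Lemma phiG_rev_between :
  0 <= phiG t /\ r * r * phiG t <= phiG_rev t <= R0 * R0 * phiG t.
Proof.
  destruct phiG_flat as [H1 H1'], phiG_rev_flat as [H2 H2'].
  split.
  - apply (flat_at_one_nonneg phiG phiG' phiG'' phiG_deriv phiG'_deriv); auto; [lra |].
    intros u Hu. apply between_in_range in Hu. left; unfold phiG''; pos_expr.
  - apply (flat_at_one_compare phiG_rev phiG_rev' phiG_rev'' phiG phiG' phiG''
             (r * r) (R0 * R0) t phiG_rev_deriv phiG_rev'_deriv phiG_deriv phiG'_deriv); auto; [lra |].
    intros u Hu. apply between_in_range in Hu.
    assert (0 < phiG'' u) by (unfold phiG''; pos_expr).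
    replace (phiG_rev'' u) with (u * u * phiG'' u) by (unfold phiG_rev'', phiG''; field; lra).
    split; apply Rmult_le_compat_r; nra.
Qed.

End Between.

Lemma sumn_ext (n : nat) (f g : nat -> R) :
  (forall i, (i < n)%nat -> f i = g i) -> sumn n f = sumn n g.
Proof.
  induction n as [| n IH]; simpl; intros Hfg; auto.
  rewrite IH by (intros; apply Hfg; lia). rewrite Hfg by lia. reflexivity.
Qed.

Lemma sumn_scal (n : nat) (f : nat -> R) (c : R) :
  sumn n (fun i => c * f i) = c * sumn n f.
Proof. induction n as [| n IH]; simpl; [ring | rewrite IH; ring]. Qed.

Lemma sumn_add_scal_diff (n : nat) (f p q : nat -> R) (c : R) :
  sumn n (fun i => f i + c * (p i - q i)) = sumn n f + c * (sumn n p - sumn n q).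
Proof. induction n as [| n IH]; simpl; [ring | rewrite IH; ring]. Qed.

Lemma sumn_le (n : nat) (f g : nat -> R) :
  (forall i, (i < n)%nat -> f i <= g i) -> sumn n f <= sumn n g.
Proof.
  induction n as [| n IH]; simpl; intros Hfg; [lra |].
  assert (f n <= g n) by (apply Hfg; lia).
  assert (sumn n f <= sumn n g) by (apply IH; intros; apply Hfg; lia).
  lra.
Qed.

Lemma sumn_lt (n : nat) (f g : nat -> R) (i0 : nat) :
  (i0 < n)%nat -> (forall i, (i < n)%nat -> f i <= g i) -> f i0 < g i0 ->
  sumn n f < sumn n g.
Proof.
  induction n as [| n IH]; simpl; intros Hi0 Hfg Hlt; [lia |].
  assert (f n <= g n) by (apply Hfg; lia).
  destruct (Nat.eq_dec i0 n) as [-> | Hne].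
  - assert (sumn n f <= sumn n g) by (apply sumn_le; intros; apply Hfg; lia). lra.
  - assert (sumn n f < sumn n g) by (apply IH; [lia | intros; apply Hfg; lia | auto]). lra.
Qed.

Lemma sumn_zero (n : nat) : sumn n (fun _ => 0) = 0.
Proof. induction n as [| n IH]; simpl; [| rewrite IH]; ring. Qed.

Lemma weighted_ratio_between (n : nat) (w f g : nat -> R) (a b : R) (i0 : nat) :
  (i0 < n)%nat -> 0 < g i0 -> (forall i, (i < n)%nat -> 0 < w i) ->
  (forall i, (i < n)%nat -> 0 <= g i /\ a * g i <= f i <= b * g i) ->
  a <= sumn n (fun i => w i * f i) / sumn n (fun i => w i * g i) <= b.
Proof.
  intros Hi0 Hg0 Hw Hfg.
  assert (Hden : 0 < sumn n (fun i => w i * g i)).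
  { rewrite <- (sumn_zero n). apply (sumn_lt _ _ _ i0); auto.
    - intros i Hi. destruct (Hfg i Hi). specialize (Hw i Hi). nra.
    - specialize (Hw i0 Hi0). nra. }
  split.
  - apply Rle_div_r; auto. rewrite <- sumn_scal.
    apply sumn_le; intros i Hi. destruct (Hfg i Hi). specialize (Hw i Hi). nra.
  - apply Rle_div_l; auto. rewrite <- sumn_scal.
    apply sumn_le; intros i Hi. destruct (Hfg i Hi). specialize (Hw i Hi). nra.
Qed.

Lemma f_divergence_form (n : nat) (p q T : nat -> R) (phi : R -> R) (c : R) :
  Gamma n p -> Gamma n q ->
  (forall i, 0 < p i -> 0 < q i -> q i * phi (p i / q i) = T i + c * (p i - q i)) ->
  sumn n T = sumn n (fun i => q i * phi (p i / q i)).
Proof.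
  intros [Hp Sp] [Hq Sq] HT.
  rewrite (sumn_ext n (fun i => q i * phi (p i / q i)) (fun i => T i + c * (p i - q i))).
  - rewrite sumn_add_scal_diff, Sp, Sq. ring.
  - intros i Hi. apply HT; auto.
Qed.

Lemma F_as_f_divergence (n : nat) (p q : nat -> R) :
  Gamma n p -> Gamma n q -> F n p q = sumn n (fun i => q i * phiF (p i / q i)).
Proof.
  intros Hp Hq. apply (f_divergence_form _ _ _ _ _ (- / 2) Hp Hq).
  intros i Hpi Hqi. unfold phiF.
  replace (2 * (p i / q i) / (1 + p i / q i)) with (2 * p i / (p i + q i)) by (field; lra).
  field; lra.
Qed.

Lemma F_rev_as_f_divergence (n : nat) (p q : nat -> R) :
  Gamma n p -> Gamma n q -> F n q p = sumn n (fun i => q i * phiF_rev (p i / q i)).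
Proof.
  intros Hp Hq. apply (f_divergence_form _ _ _ _ _ (/ 2) Hp Hq).
  intros i Hpi Hqi. unfold phiF_rev.
  replace (2 / (1 + p i / q i)) with (2 * q i / (q i + p i)) by (field; lra).
  field; lra.
Qed.

Lemma G_as_f_divergence (n : nat) (p q : nat -> R) :
  Gamma n p -> Gamma n q -> G n p q = sumn n (fun i => q i * phiG (p i / q i)).
Proof.
  intros Hp Hq. apply (f_divergence_form _ _ _ _ _ (/ 2) Hp Hq).
  intros i Hpi Hqi. unfold phiG.
  replace ((p i / q i + 1) / (2 * (p i / q i))) with ((p i + q i) / (2 * p i)) by (field; lra).
  field; lra.
Qed.

Lemma G_rev_as_f_divergence (n : nat) (p q : nat -> R) :
  Gamma n p -> Gamma n q -> G n q p = sumn n (fun i => q i * phiG_rev (p i / q i)).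
Proof.
  intros Hp Hq. apply (f_divergence_form _ _ _ _ _ (- / 2) Hp Hq).
  intros i Hpi Hqi. unfold phiG_rev.
  replace ((p i / q i + 1) / 2) with ((q i + p i) / (2 * q i)) by (field; lra).
  field; lra.
Qed.

Lemma ratio_bounds_straddle_one (n : nat) (p q : nat -> R) (r R0 : R) :
  Gamma n p -> Gamma n q -> (forall i, (i < n)%nat -> r <= p i / q i <= R0) ->
  r <= 1 <= R0.
Proof.
  intros [Hp Sp] [Hq Sq] Hb.
  assert (Hpq : forall i, (i < n)%nat -> r * q i <= p i <= R0 * q i).
  { intros i Hi. specialize (Hb i Hi). specialize (Hq i Hi).
    replace (p i) with (p i / q i * q i) by (field; lra). nra. }
  assert (Hlo : sumn n (fun i => r * q i) <= sumn n p)
    by (apply sumn_le; intros i Hi; apply Hpq, Hi).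
  assert (Hup : sumn n p <= sumn n (fun i => R0 * q i))
    by (apply sumn_le; intros i Hi; apply Hpq, Hi).
  rewrite sumn_scal, Sp, Sq in Hlo, Hup. lra.
Qed.

Lemma sqrt_between_of_sqr (a b x : R) :
  0 <= a <= b -> a * a <= x <= b * b -> a <= sqrt x <= b.
Proof.
  intros Hab [Hax Hxb].
  rewrite <- (sqrt_square a), <- (sqrt_square b) by lra.
  split; apply sqrt_le_1_alt; auto.
Qed.

Theorem mainTheorem17 (n : nat) (p q : nat -> R) (r R0 : R) :
  (2 <= n)%nat ->
  Gamma n p -> Gamma n q ->
  (exists i, (i < n)%nat /\ p i <> q i) ->
  0 < r -> r <= R0 ->
  (forall i, (i < n)%nat -> r <= p i / q i <= R0) ->
  (r <= F n q p / F n p q <= R0) /\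
  (r <= sqrt (G n q p / G n p q) <= R0).
Proof.
  intros _ Hp Hq [i0 [Hi0 Hne]] Hr HrR Hb.
  destruct (ratio_bounds_straddle_one n p q r R0 Hp Hq Hb) as [Hr1 H1R].
  assert (Hqpos : forall i, (i < n)%nat -> 0 < q i) by apply Hq.
  assert (Ht0 : 0 < p i0 / q i0) by (apply Rdiv_lt_0_compat; [apply Hp | apply Hq]; auto).
  assert (Ht1 : p i0 / q i0 <> 1).
  { intros Heq. apply Hne. specialize (Hqpos i0 Hi0).
    replace (p i0) with (p i0 / q i0 * q i0) by (field; lra). rewrite Heq; ring. }
  rewrite (F_as_f_divergence n p q), (F_rev_as_f_divergence n p q),
    (G_as_f_divergence n p q), (G_rev_as_f_divergence n p q) by auto.
  split.
  - apply (weighted_ratio_between _ _ _ _ _ _ i0); auto.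
    + apply phiF_pos; auto.
    + intros i Hi. apply phiF_rev_between; auto.
  - apply sqrt_between_of_sqr; [lra |].
    apply (weighted_ratio_between _ _ _ _ _ _ i0); auto.
    + apply phiG_pos; auto.
    + intros i Hi. apply phiG_rev_between; auto.
Qed.
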